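(* Fix integers $q\ge2$, $\ell\ge1$, $L\ge\ell$, a real $r\in[0,1-\frac{\ell}{L+1})$ and $\varepsilon>0$. There is a function $\delta:\mathbb{N}\to\mathbb{R}$ with $\delta(n)\to0$ as $n\to\infty$ such that, for every $n$ with $rn\in\mathbb{N}$, if there exists an $(r,\ell,L)$ list-recoverable code $C\subseteq[q]^n$ of rate at least $1-r-\varepsilon$ (i.e. $|C|\ge q^{(1-r-\varepsilon)n}$), then $L\ge\frac{\ell r}{\varepsilon}+\ell-1+\delta(n)$.
   Context: $\binom{[q]}{\le\ell}$ is the family of subsets of $[q]=\{1,\dots,q\}$ of size at most $\ell$. The rate of $C\subseteq[q]^n$ is $\log_q(|C|)/n$. $C$ is $(r,\ell,L)$ list-recoverable if for all $S_1,\dots,S_n\in\binom{[q]}{\le\ell}$, at most $L$ codewords $c\in C$ have $c_i\notin S_i$ for at most $rn$ coordinates $i$. *)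

From HB Require Import structures.
From mathcomp Require Import all_boot all_order all_algebra.
From mathcomp Require Import all_classical all_reals all_analysis.
Set Implicit Arguments. Unset Strict Implicit. Unset Printing Implicit Defensive.
Import Order.TTheory GRing.Theory Num.Theory.
Local Open Scope ring_scope.

(* Words of length n over the alphabet [q], represented as 'I_q
   (i.e. {0,...,q-1}, a relabelling of {1,...,q}). *)
Definition word (q n : nat) := {ffun 'I_n -> 'I_q}.

Definition nagree (q n : nat) (S : 'I_n -> {set 'I_q}) (c : word q n) : nat :=
  #|[set i : 'I_n | c i \notin S i]|.

Definition list_recoverable (R : realType) (q n : nat) (C : {set word q n})
    (r : R) (ell L : nat) : Prop :=
  forall S : 'I_n -> {set 'I_q},
    (forall i, (#|S i| <= ell)%N) ->
    (#|[set c in C | ((nagree S c)%:R <= r * n%:R)%R]| <= L)%N.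

From HB Require Import structures.
From mathcomp Require Import all_boot all_order all_algebra.
From mathcomp Require Import all_classical all_reals all_analysis.
From mathcomp Require Import zify lra.
Set Implicit Arguments. Unset Strict Implicit. Unset Printing Implicit Defensive.
Import Order.TTheory GRing.Theory Num.Theory.

(* Let C be list-recoverable with radius K = r n, put d = L + 1 - ell and
   b = floor ((K - 1) (L + 1) / d).  If |C| > L q^(n - b), pigeonhole gives
   L + 1 codewords sharing their first n - b coordinates.  There S_i is the
   common value; on each of the last b coordinates S_i collects the values of
   all but d of the L + 1 codewords, the skipped ones chosen in round-robin
   order.  Every codeword is then skipped at most b d / (L + 1) + 1 <= K times,
   so all L + 1 of them fit in one list: a contradiction.  Hence
   q^((1 - r - eps) n) <= |C| <= L q^(n - b), which rearranges to
   n (r ell - eps d) < (L + 1) (d + 1).  So either r ell <= eps d, which is the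
   bound with delta = 0, or such codes only exist for bounded n, and delta may
   vanish beyond that bound. *)

Lemma exists_big_fiber (T U : finType) (f : T -> U) (A : {set T}) k :
  k * #|U| < #|A| -> exists y, k < #|[set x in A | f x == y]|.
Proof.
move=> ltA; apply/existsP; apply: contraLR ltA; rewrite negb_exists -leqNgt.
move=> /forallP small; rewrite -sum1_card (partition_big f predT) //=.
apply: (@leq_trans (\sum_(y : U) k)); last by rewrite sum_nat_const mulnC.
by apply: leq_sum => y _; rewrite sum1dep_card leqNgt small.
Qed.

Lemma exists_injective_in (T : finType) (A : {pred T}) k :
  k < #|A| -> exists t : 'I_k.+1 -> T, injective t /\ forall m, t m \in A.
Proof.
move=> ltkA; exists (fun m => enum_val (widen_ord ltkA m)); split.
  by move=> m1 m2 /enum_val_inj /(congr1 val) /= /val_inj.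
by move=> m; apply: enum_valP.
Qed.

Section RoundRobin.

Variables p d : nat.

(* Consecutive steps sweep cyclically through 'I_p.+1, d indices at a time,
   so every index is skipped about equally often. *)
Definition skipped (j : nat) : {set 'I_p.+1} := [set inZp (j * d + s) | s : 'I_d].

Lemma card_skipped j : d <= p.+1 -> #|skipped j| = d.
Proof.
move=> le_dp; rewrite card_imset ?card_ord // => s1 s2 /(congr1 val) /= /eqP.
rewrite eqn_modDl !modn_small ?(leq_trans (ltn_ord _) le_dp) //.
by move/eqP/val_inj.
Qed.

Lemma card_residue_class N m : #|[set x : 'I_N | x %% p.+1 == m]| <= N %/ p.+1 + 1.
Proof.
set k := N %/ p.+1; rewrite addn1 -[k.+1]card_ord.
apply: (@leq_card_in _ _ (fun x : 'I_N => inord (x %/ p.+1) : 'I_k.+1)).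
have le_k (x : 'I_N) : x %/ p.+1 <= k by apply/leq_div2r/ltnW.
move=> x y; rewrite !inE => /eqP xm /eqP ym /(congr1 val).
rewrite /= !inordK ?ltnS ?le_k // => xy; apply: val_inj.
by rewrite /= (divn_eq x p.+1) (divn_eq y p.+1) xy xm ym.
Qed.

Lemma card_skipping_positions n a (m : 'I_p.+1) :
  #|[set i : 'I_n | (a <= i) && (m \in skipped (i - a))]| <= (n - a) * d %/ p.+1 + 1.
Proof.
case: n => [|n]; first by rewrite (leq_trans (max_card _)) ?card_ord.
pose slots := [set x : 'I_((n.+1 - a) * d) | x %% p.+1 == m].
pose pos (x : 'I_((n.+1 - a) * d)) : 'I_n.+1 := inord (a + x %/ d).
apply: leq_trans (card_residue_class _ m); rewrite -/slots.
apply: leq_trans (leq_imset_card pos _); apply: subset_leq_card.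
apply/fintype.subsetP => i; rewrite inE => /andP[le_ai /imsetP[s _ mE]].
have lt_slot : (i - a) * d + s < (n.+1 - a) * d.
  by have := ltn_ord i; have := ltn_ord s; nia.
apply/imsetP; exists (Ordinal lt_slot); first by rewrite inE mE.
have d_gt0 : 0 < d by apply: leq_ltn_trans (ltn_ord s).
by apply: val_inj; rewrite /pos /= divnMDl // divn_small // addn0 subnKC ?inordK.
Qed.

End RoundRobin.

Lemma round_robin_cover q n a ell L (t : 'I_L.+1 -> word q n) :
  0 < ell -> (forall m (i : 'I_n), i < a -> t m i = t ord0 i) ->
  exists S : 'I_n -> {set 'I_q}, (forall i, #|S i| <= ell) /\
    forall m, nagree S (t m) <= (n - a) * (L.+1 - ell) %/ L.+1 + 1.
Proof.
move=> ell_gt0 t_prefix; set d := L.+1 - ell.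
pose S (i : 'I_n) := if i < a then [set t ord0 i]
                     else [set t m i | m in ~: skipped L d (i - a)].
exists S; split=> [i | m].
  rewrite /S; case: ifP => _; first by rewrite cards1.
  apply: leq_trans (leq_imset_card _ _) _.
  have := cardsC (skipped L d (i - a)).
  by rewrite card_ord card_skipped ?leq_subr //; move: #|_| => k; rewrite /d; lia.
apply: leq_trans (card_skipping_positions d n a m).
apply/subset_leq_card/fintype.subsetP => i; rewrite !inE /S.
case: ltnP => [lt_ia | le_ai]; first by rewrite t_prefix // inE eqxx.
by apply: contraR => not_skipped; apply/imsetP; exists m; rewrite ?inE.
Qed.

Lemma card_le_of_list_recovery q n ell L K a (C : {set word q n}) :
  0 < ell -> a <= n -> (n - a) * (L.+1 - ell) %/ L.+1 < K ->
  (forall S : 'I_n -> {set 'I_q}, (forall i, #|S i| <= ell) ->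
      #|[set c in C | nagree S c <= K]| <= L) ->
  #|C| <= L * q ^ a.
Proof.
move=> ell_gt0 le_an radiusK recC; rewrite leqNgt; apply/negP => bigC.
pose prefix (c : word q n) : {ffun 'I_a -> 'I_q} := [ffun i => c (widen_ord le_an i)].
have [y bigF] : exists y, L < #|[set c in C | prefix c == y]|.
  by apply: exists_big_fiber; rewrite card_ffun !card_ord.
have [t [t_inj tF]] := exists_injective_in bigF.
have t_prefix m (i : 'I_n) : i < a -> t m i = t ord0 i.
  move=> lt_ia; have := tF m; have := tF ord0.
  rewrite !inE => /andP[_ /eqP prefix0] /andP[_ /eqP prefixm].
  have /ffunP/(_ (Ordinal lt_ia)) := etrans prefixm (esym prefix0).
  by rewrite !ffunE; have -> : widen_ord le_an (Ordinal lt_ia) = i by apply: val_inj.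
have [S [cardS close]] := round_robin_cover ell_gt0 t_prefix.
have := recC S cardS; apply/negP; rewrite -ltnNge -[L.+1]card_ord -(card_imset _ t_inj).
apply/subset_leq_card/fintype.subsetP => _ /imsetP[m _ ->].
have := tF m; rewrite !inE => /andP[-> _] /=.
by apply: leq_trans (close m) _; rewrite addn1.
Qed.

Local Open Scope ring_scope.

Lemma exponent_lt_of_powR_le (R : realType) (q L k : nat) (x : R) :
  (1 < q)%N -> q%:R `^ x <= L%:R * q%:R ^+ k -> x < (L + k)%:R.
Proof.
move=> q_gt1 le_x; rewrite ltNge; apply/negP => le_Lk.
have q_ge1 : 1 <= q%:R :> R by rewrite ler1n ltnW.
have := le_trans (ler_powR q_ge1 le_Lk) le_x; apply/negP; rewrite -ltNge.
rewrite powR_mulrn ?ler0n // exprD ltr_pM2r ?exprn_gt0 ?ltr0n ?(ltn_trans _ q_gt1) //.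
by rewrite -natrX ltr_nat ltn_expl.
Qed.

Lemma list_recoverable_rate_bound (R : realType) q n ell L K (r eps : R)
    (C : {set word q n}) :
  (1 < q)%N -> (0 < ell)%N -> (ell <= L)%N ->
  r * L.+1%:R < (L.+1 - ell)%N%:R -> (0 < K)%N -> r * n%:R = K%:R ->
  list_recoverable C r ell L -> q%:R `^ ((1 - r - eps) * n%:R) <= #|C|%:R ->
  n%:R * (r * ell%:R - eps * (L.+1 - ell)%N%:R) < (L.+1 * (L.+2 - ell))%N%:R.
Proof.
move=> q_gt1 ell_gt0 le_ell_L rP_lt_d K_gt0 rnK rec rate.
set d := (L.+1 - ell)%N; have d_gt0 : (0 < d)%N by rewrite subn_gt0 ltnS.
set b := (K.-1 * L.+1 %/ d)%N.
have le_bd : (b * d <= K.-1 * L.+1)%N by apply: leq_trunc_div.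
have lt_bd : (K.-1 * L.+1 < b.+1 * d)%N by apply: ltn_ceil.
have lt_KP : (K * L.+1 < n * d)%N.
  rewrite -(ltr_nat R) !natrM -rnK mulrAC mulrC ltr_pM2l // ltr0n lt0n.
  by apply: contraTneq K_gt0 => n0; rewrite -leqNgt -(ler_nat R) -rnK n0 mulr0.
have le_bn : (b <= n)%N.
  rewrite -(leq_pmul2r d_gt0) ltnW // (leq_ltn_trans le_bd) // (leq_ltn_trans _ lt_KP) //.
  by rewrite leq_mul2r leq_pred orbT.
have cardC : (#|C| <= L * q ^ (n - b))%N.
  apply: (card_le_of_list_recovery (K := K) ell_gt0 (leq_subr b n)).
    by rewrite subKn // (leq_ltn_trans (leq_div2r _ le_bd)) ?mulnK ?ltn_predL.
  move=> S cardS; have := rec S cardS.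
  suff -> : [set c in C | (nagree S c)%:R <= r * n%:R] = [set c in C | nagree S c <= K]%N by [].
  by apply/setP => c; rewrite !inE rnK ler_nat.
have exp_lt : (1 - r - eps) * n%:R < (L + (n - b))%:R.
  apply: exponent_lt_of_powR_le q_gt1 _; apply: le_trans rate _.
  by rewrite -natrX -natrM ler_nat.
have b_lt : b%:R * d%:R < (L%:R + r * n%:R + eps * n%:R) * d%:R.
  by rewrite ltr_pM2r ?ltr0n //; move: exp_lt; rewrite natrD natrB //; lra.
have Kb_lt := lt_bd; rewrite -(ltr_nat R) !natrM -!natr1 in Kb_lt.
have K1E : K.-1%:R = r * n%:R - 1 :> R by rewrite rnK -[in RHS](prednK K_gt0) -natr1 addrK.
have ellE : ell%:R = L%:R + 1 - d%:R :> R by rewrite natrB ?natr1 ?leqW // opprB addrC subrK.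
rewrite natrM subSn ?leqW // -!natr1 -/d ellE; rewrite K1E in Kb_lt.
lra.
Qed.

Local Open Scope classical_set_scope.

Theorem corollary5p2 (R : realType) (q ell L : nat) (r eps : R) :
  (2 <= q)%N -> (1 <= ell)%N -> (ell <= L)%N ->
  0 <= r -> r < 1 - ell%:R / (L.+1)%:R -> 0 < eps ->
  exists delta : nat -> R,
    delta n @[n --> \oo] --> (0 : R^o) /\
    forall n : nat,
      (exists k : nat, r * n%:R = k%:R) ->
      (exists C : {set word q n},
          list_recoverable C r ell L /\
          q%:R `^ ((1 - r - eps) * n%:R) <= #|C|%:R) ->
      ell%:R * r / eps + ell%:R - 1 + delta n <= L%:R.
Proof.
move=> q_gt1 ell_gt0 le_ell_L _ r_lt eps_gt0.
have dE : (L.+1 - ell)%N%:R = L.+1%:R - ell%:R :> R by rewrite natrB // leqW.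
have rP_lt_d : r * L.+1%:R < (L.+1 - ell)%N%:R.
  by move: r_lt; rewrite dE -(@ltr_pM2r _ L.+1%:R) ?ltr0n // mulrBl mul1r divfK.
set gap := r * ell%:R - eps * (L.+1 - ell)%N%:R.
have [gap_le0 | gap_gt0] := lerP gap 0.
  exists (fun=> 0); split=> [|n _ _]; first exact: (cvg_cst (0 : R^o)).
  have : ell%:R * r / eps <= (L.+1 - ell)%N%:R.
    by rewrite ler_pdivrMr // mulrC (mulrC _ eps) -subr_le0.
  by rewrite dE -natr1; lra.
set N := (L.+1 * (L.+2 - ell))%N%:R / gap.
exists (fun n => if N <= n%:R then 0 else - (ell%:R * r / eps + ell%:R)); split.
  by apply: (cvg_near_cst (0 : R^o)); apply: filterS (nbhs_infty_ger N) => n /= ->.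
move=> n [K rnK] [C [rec rate]]; case: ifPn => [le_Nn | _]; last by have := ler0n R L; lra.
have N_gt0 : 0 < N by rewrite divr_gt0 // ltr0n muln_gt0 subn_gt0 ltnS leqW.
have r_gt0 : 0 < r.
  have := mulr_ge0 (ltW eps_gt0) (ler0n R (L.+1 - ell)).
  rewrite -(pmulr_lgt0 _ (_ : 0 < ell%:R)) ?ltr0n //; rewrite /gap in gap_gt0; lra.
have K_gt0 : (0 < K)%N by rewrite -(ltr_nat R) -rnK mulr_gt0 // (lt_le_trans N_gt0).
have := list_recoverable_rate_bound q_gt1 ell_gt0 le_ell_L rP_lt_d K_gt0 rnK rec rate.
have bound_le : (L.+1 * (L.+2 - ell))%N%:R <= n%:R * gap by rewrite -ler_pdivrMr.
by rewrite -/gap ltNge bound_le.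
Qed.
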